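(* Let $N\ge 4$ be even and let $P_1,\dots,P_N$ be an $N$-periodic billiard trajectory in $E$, with outer polygon $P_1',\dots,P_N'$. For $j=1,2$ let $\bar Q'_{j,i}$ be the foot of the perpendicular from $f_j$ to the line $P_i'P_{i+1}'$, and let $\bar A_j'$ be the signed area of the polygon $\bar Q'_{j,1},\dots,\bar Q'_{j,N}$. Then $\bar A_1'=\bar A_2'$, i.e. $\bar A_1'/\bar A_2'=1$.
   Context: Let $E$ be the ellipse $x^2/a^2+y^2/b^2=1$ with $a>b>0$, center $O=(0,0)$ and foci $f_1=(-\sqrt{a^2-b^2},0)$, $f_2=(\sqrt{a^2-b^2},0)$. An $N$-periodic billiard trajectory is a convex polygon with vertices $P_1,\dots,P_N\in E$ (indices mod $N$), listed counterclockwise and winding once around $O$, with $P_i\neq P_{i+1}$, such that at every vertex $P_i$ the normal line to $E$ at $P_i$ bisects the angle $\angle P_{i-1}P_iP_{i+1}$, and all of whose sides are tangent to a common ellipse confocal with $E$. Its outer polygon has vertices $P_i'$ = intersection of the tangent lines to $E$ at $P_i$ and at $P_{i+1}$. The signed area of a polygon with vertices $W_i=(x_i,y_i)$, $i=1,\dots,N$ (indices mod $N$), is $S=\tfrac12\sum_{i=1}^N (x_iy_{i+1}-x_{i+1}y_i)$. *)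

From Stdlib Require Import Reals Lra List.
Open Scope R_scope.

Definition pt := (R * R)%type.

Definition cross (u v : pt) : R := fst u * snd v - snd u * fst v.
Definition dot (u v : pt) : R := fst u * fst v + snd u * snd v.
Definition vsub (u v : pt) : pt := (fst u - fst v, snd u - snd v).
Definition vadd (u v : pt) : pt := (fst u + fst v, snd u + snd v).
Definition vscale (k : R) (u : pt) : pt := (k * fst u, k * snd u).
Definition vnorm (u : pt) : R := sqrt (dot u u).

Definition on_line (p q X : pt) : Prop :=
  exists t : R, X = vadd p (vscale t (vsub q p)).

Definition on_ellipse (A B : R) (X : pt) : Prop :=
  (fst X)^2 / A^2 + (snd X)^2 / B^2 = 1.

Definition ell_normal (a b : R) (P : pt) : pt := (fst P / a^2, snd P / b^2).

Definition on_tangent (a b : R) (P X : pt) : Prop :=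
  fst X * fst P / a^2 + snd X * snd P / b^2 = 1.

Definition line_tangent_to_ellipse (A B : R) (p q : pt) : Prop :=
  p <> q /\ exists! X : pt, on_line p q X /\ on_ellipse A B X.

Definition confocal (a b A B : R) : Prop :=
  A > B /\ B > 0 /\ A^2 - B^2 = a^2 - b^2.

Definition focus1 (a b : R) : pt := (- sqrt (a^2 - b^2), 0).
Definition focus2 (a b : R) : pt := (sqrt (a^2 - b^2), 0).

(* N-periodic billiard trajectory, indices 0..N-1 taken mod N
   (encoded as an N-periodic sequence P : nat -> pt). *)
Definition billiard_trajectory (a b : R) (N : nat) (P : nat -> pt) : Prop :=
  (forall i, P (i + N)%nat = P i) /\
  (forall i, on_ellipse a b (P i)) /\
  (forall i, P i <> P (S i)) /\
  (* counterclockwise, winding once around O: polar angles strictly increase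
     and increase by exactly 2*PI over one period *)
  (exists (r phi : nat -> R),
      (forall i, r i > 0) /\
      (forall i, P i = (r i * cos (phi i), r i * sin (phi i))) /\
      (forall i, phi i < phi (S i)) /\
      (forall i, phi (i + N)%nat = phi i + 2 * PI)) /\
  (* convex (counterclockwise turns) *)
  (forall i, cross (vsub (P (S i)) (P i)) (vsub (P (S (S i))) (P (S i))) >= 0) /\
  (* reflection law: the normal at P_{i+1} bisects angle P_i P_{i+1} P_{i+2} *)
  (forall i,
      let u := vsub (P i) (P (S i)) in
      let v := vsub (P (S (S i))) (P (S i)) in
      cross (vadd (vscale (/ vnorm u) u) (vscale (/ vnorm v) v))
            (ell_normal a b (P (S i))) = 0) /\
  (exists A B : R, confocal a b A B /\
      forall i, line_tangent_to_ellipse A B (P i) (P (S i))).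

Definition outer_polygon (a b : R) (P P' : nat -> pt) : Prop :=
  forall i, on_tangent a b (P i) (P' i) /\ on_tangent a b (P (S i)) (P' i).

Definition pedal_feet (f : pt) (P' Q : nat -> pt) : Prop :=
  forall i, on_line (P' i) (P' (S i)) (Q i) /\
            dot (vsub f (Q i)) (vsub (P' (S i)) (P' i)) = 0.

Definition signed_area (N : nat) (W : nat -> pt) : R :=
  / 2 * fold_right Rplus 0
    (map (fun i => cross (W i) (W ((S i) mod N)%nat)) (seq 0 N)).

From Stdlib Require Import Reals Lra List Arith Lia Psatz.
Open Scope R_scope.

(* The heart of the proof is that an N-periodic billiard orbit with N = 2k is
   centrally symmetric, P_{k+i} = -P_i.  Writing P_i = (a cos t_i, b sin t_i)
   in eccentric angles, tangency of the side P_i P_{i+1} to the confocal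
   caustic x^2/A^2 + y^2/B^2 = 1 (which lies strictly inside E) becomes an
   explicit trigonometric equation tangency_fn t_i t_{i+1} = 0, and each angle
   has exactly one such successor in (t_i, t_i + π), depending monotonically on
   t_i.  Since the equation is invariant under the half turn t -> t + π, the
   half-turned orbit either coincides with the shifted orbit t_{k+i}, giving
   N = 2k, or interlaces with it forever, which forces N to be odd.

   Finally the pedal feet are identified with feet of
   perpendiculars onto the tangent lines at the vertices, so the f_2-pedal
   polygon is the half turn of the cyclically shifted f_1-pedal polygon
   (f_2 = -f_1), and the signed area is invariant under both operations. *)

Lemma sq_pos (x : R) : x <> 0 -> x^2 > 0.
Proof. intros Hx. rewrite <- Rsqr_pow2. exact (Rsqr_pos_lt x Hx). Qed.

Lemma Rdiv_sq_nonneg (x A : R) : A > 0 -> 0 <= x^2 / A^2.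
Proof. intros HA. unfold Rdiv. apply Rmult_le_pos; [nra|]. left; apply Rinv_0_lt_compat; nra. Qed.

Lemma Rdiv_sq_pos (x A : R) : A > 0 -> x <> 0 -> 0 < x^2 / A^2.
Proof.
  intros HA Hx. unfold Rdiv. apply Rmult_lt_0_compat; [exact (sq_pos x Hx)|].
  apply Rinv_0_lt_compat; nra.
Qed.

Definition ellq (A B : R) (X : pt) : R := fst X^2/A^2 + snd X^2/B^2.
Definition ellb (A B : R) (X Y : pt) : R := fst X * fst Y/A^2 + snd X * snd Y/B^2.

Lemma vsub_nonzero (p q : pt) : p <> q -> vsub q p <> (0, 0).
Proof.
  destruct p as [px py], q as [qx qy]; unfold vsub; cbn [fst snd].
  intros Hpq E. injection E as Ex Ey. apply Hpq. f_equal; lra.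
Qed.

Lemma ellq_pos (A B : R) (d : pt) : A > 0 -> B > 0 -> d <> (0, 0) -> ellq A B d > 0.
Proof.
  intros HA HB Hd. destruct d as [x y]; unfold ellq; cbn [fst snd].
  pose proof (Rdiv_sq_nonneg x A HA). pose proof (Rdiv_sq_nonneg y B HB).
  destruct (Req_dec x 0) as [Ex|Ex].
  - assert (Ey : y <> 0) by (intro; subst; apply Hd; reflexivity).
    pose proof (Rdiv_sq_pos y B HB Ey). lra.
  - pose proof (Rdiv_sq_pos x A HA Ex). lra.
Qed.

Lemma ellq_antitone (A B A' B' : R) (X : pt) : 0 < A <= A' -> 0 < B <= B' ->
  ellq A' B' X <= ellq A B X.
Proof.
  intros HA HB. unfold ellq, Rdiv.
  assert (/ A'^2 <= / A^2) by (apply Rinv_le_contravar; nra).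
  assert (/ B'^2 <= / B^2) by (apply Rinv_le_contravar; nra).
  pose proof (pow2_ge_0 (fst X)). pose proof (pow2_ge_0 (snd X)). nra.
Qed.

Lemma ellq_antitone_strict (A B A' B' : R) (X : pt) : 0 < A < A' -> 0 < B < B' ->
  X <> (0, 0) -> ellq A' B' X < ellq A B X.
Proof.
  intros HA HB HX. destruct X as [x y]; unfold ellq, Rdiv; cbn [fst snd].
  assert (/ A'^2 < / A^2) by (apply Rinv_lt_contravar; [apply Rmult_lt_0_compat|]; nra).
  assert (/ B'^2 < / B^2) by (apply Rinv_lt_contravar; [apply Rmult_lt_0_compat|]; nra).
  destruct (Req_dec x 0) as [Ex|Ex].
  - assert (Ey : y <> 0) by (intro; subst; apply HX; reflexivity).
    pose proof (sq_pos y Ey). subst x. nra.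
  - pose proof (sq_pos x Ex). pose proof (pow2_ge_0 y). nra.
Qed.

Lemma ellq_line (A B : R) (p d : pt) (s : R) :
  ellq A B (vadd p (vscale s d)) = ellq A B d * s^2 + 2 * ellb A B p d * s + ellq A B p.
Proof. unfold ellq, ellb, vadd, vscale; cbn [fst snd]. unfold Rdiv. ring. Qed.

Lemma ellq_chord (A B : R) (X Y : pt) (s : R) :
  ellq A B (vadd X (vscale s (vsub Y X))) =
  ellq A B (vsub Y X) * (s * (s - 1)) + s * ellq A B Y + (1 - s) * ellq A B X.
Proof. unfold ellq, vadd, vscale, vsub; cbn [fst snd]. unfold Rdiv. ring. Qed.

Lemma line_param_inj (p q : pt) (s1 s2 : R) : p <> q ->
  vadd p (vscale s1 (vsub q p)) = vadd p (vscale s2 (vsub q p)) -> s1 = s2.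
Proof.
  intros Hpq E. pose proof (vsub_nonzero p q Hpq) as Hd.
  destruct p as [px py], q as [qx qy]; unfold vadd, vscale, vsub in *; cbn [fst snd] in *.
  injection E as Ex Ey.
  destruct (Req_dec (qx - px) 0) as [Dx|Dx].
  - assert (Dy : qy - py <> 0) by (intro Dy; apply Hd; rewrite Dx, Dy; reflexivity).
    apply (Rmult_eq_reg_r (qy - py)); [lra | exact Dy].
  - apply (Rmult_eq_reg_r (qx - px)); [lra | exact Dx].
Qed.

Lemma quadratic_two_roots (al be ga : R) : al <> 0 -> be^2 - al*ga > 0 ->
  exists s1 s2, s1 <> s2 /\ al*s1^2 + 2*be*s1 + ga = 0 /\ al*s2^2 + 2*be*s2 + ga = 0.
Proof.
  intros Hal HD. set (r := sqrt (be^2 - al*ga)).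
  assert (Hr2 : r * r = be^2 - al*ga) by (apply sqrt_sqrt; lra).
  assert (Hr : r > 0) by (apply sqrt_lt_R0; lra).
  assert (Hroot : forall e, e * e = 1 ->
            al * ((-be + e*r)/al)^2 + 2*be*((-be + e*r)/al) + ga = 0).
  { intros e He.
    replace (al * ((-be + e*r)/al)^2 + 2*be*((-be + e*r)/al) + ga)
      with ((e*e*(r*r) - (be^2 - al*ga))/al) by (field; exact Hal).
    rewrite He, Hr2. field. exact Hal. }
  exists ((-be + 1*r)/al), ((-be + (-1)*r)/al).
  split; [|split; apply Hroot; ring].
  intro E. assert (Hz : 2 * r = ((-be + 1*r)/al - (-be + (-1)*r)/al) * al) by (field; exact Hal).
  rewrite E in Hz. lra.
Qed.

Lemma secant_not_tangent (A B : R) (p q X Y : pt) : X <> Y ->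
  on_line p q X -> on_ellipse A B X -> on_line p q Y -> on_ellipse A B Y ->
  ~ line_tangent_to_ellipse A B p q.
Proof.
  intros HXY HX HXe HY HYe [_ [Z [_ HZ]]].
  apply HXY. rewrite <- (HZ X (conj HX HXe)), <- (HZ Y (conj HY HYe)). reflexivity.
Qed.

(* Quarter-discriminant of the quadratic [s |-> ellq (p + s (q - p)) - 1]. *)
Definition tangency_disc (A B : R) (p q : pt) : R :=
  ellb A B p (vsub q p) ^ 2 - ellq A B (vsub q p) * (ellq A B p - 1).

Lemma tangency_disc_at (A B : R) (p q : pt) (s : R) :
  tangency_disc A B p q =
  (ellq A B (vsub q p) * s + ellb A B p (vsub q p)) ^ 2
  - ellq A B (vsub q p) * (ellq A B (vadd p (vscale s (vsub q p))) - 1).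
Proof. rewrite ellq_line. unfold tangency_disc. ring. Qed.

Lemma disc_pos_not_tangent (A B : R) (p q : pt) : A > 0 -> B > 0 -> p <> q ->
  tangency_disc A B p q > 0 -> ~ line_tangent_to_ellipse A B p q.
Proof.
  intros HA HB Hpq HD. set (d := vsub q p).
  pose proof (ellq_pos A B d HA HB (vsub_nonzero p q Hpq)) as Hal.
  destruct (quadratic_two_roots (ellq A B d) (ellb A B p d) (ellq A B p - 1))
    as (s1 & s2 & Hs & E1 & E2); [lra | exact HD |].
  apply (secant_not_tangent A B p q (vadd p (vscale s1 d)) (vadd p (vscale s2 d))).
  - intro E. exact (Hs (line_param_inj p q s1 s2 Hpq E)).
  - exists s1; reflexivity.
  - change (ellq A B (vadd p (vscale s1 d)) = 1). rewrite ellq_line. lra.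
  - exists s2; reflexivity.
  - change (ellq A B (vadd p (vscale s2 d)) = 1). rewrite ellq_line. lra.
Qed.

Lemma interior_point_not_tangent (A B : R) (p q Z : pt) : A > 0 -> B > 0 -> p <> q ->
  on_line p q Z -> ellq A B Z < 1 -> ~ line_tangent_to_ellipse A B p q.
Proof.
  intros HA HB Hpq [s HZ] HZin. apply disc_pos_not_tangent; auto.
  pose proof (ellq_pos A B (vsub q p) HA HB (vsub_nonzero p q Hpq)).
  rewrite (tangency_disc_at A B p q s), <- HZ.
  pose proof (pow2_ge_0 (ellq A B (vsub q p) * s + ellb A B p (vsub q p))). nra.
Qed.

Lemma tangent_line_equation (A B : R) (p q : pt) : A > 0 -> B > 0 ->
  line_tangent_to_ellipse A B p q ->
  A^2 * (snd q - snd p)^2 + B^2 * (fst q - fst p)^2 = (cross p q)^2.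
Proof.
  intros HA HB Ht. pose proof Ht as [Hpq [X [[[s HX] HXe] _]]].
  assert (HD : tangency_disc A B p q = 0).
  { destruct (Rlt_or_le 0 (tangency_disc A B p q)) as [Hpos|Hle].
    - exfalso. exact (disc_pos_not_tangent A B p q HA HB Hpq Hpos Ht).
    - rewrite (tangency_disc_at A B p q s), <- HX in Hle |- *.
      change (ellq A B X = 1) in HXe. rewrite HXe in Hle |- *.
      pose proof (pow2_ge_0 (ellq A B (vsub q p) * s + ellb A B p (vsub q p))). nra. }
  assert (HE : A^2 * B^2 * tangency_disc A B p q =
               B^2 * (fst q - fst p)^2 + A^2 * (snd q - snd p)^2 - (cross p q)^2).
  { unfold tangency_disc, ellq, ellb, cross, vsub; cbn [fst snd]. field; lra. }
  rewrite HD, Rmult_0_r in HE. lra.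
Qed.

Lemma ellipse_no_three_collinear (a b : R) (X Y Z : pt) : a > 0 -> b > 0 ->
  on_ellipse a b X -> on_ellipse a b Y -> on_ellipse a b Z ->
  X <> Y -> X <> Z -> Y <> Z -> on_line X Y Z -> False.
Proof.
  intros Ha Hb HX HY HZ Hxy Hxz Hyz [s Hs].
  pose proof (ellq_chord a b X Y s) as Hq. rewrite <- Hs in Hq.
  change (ellq a b X = 1) in HX. change (ellq a b Y = 1) in HY. change (ellq a b Z = 1) in HZ.
  rewrite HX, HY, HZ in Hq.
  pose proof (ellq_pos a b (vsub Y X) Ha Hb (vsub_nonzero X Y Hxy)).
  assert (Hs0 : s * (s - 1) = 0) by (apply (Rmult_eq_reg_l (ellq a b (vsub Y X))); lra).
  destruct (Rmult_integral _ _ Hs0) as [E|E]; [apply Hxz | apply Hyz]; rewrite Hs;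
    unfold vadd, vscale, vsub; destruct X, Y; cbn [fst snd];
    [rewrite E | replace s with 1 by lra]; f_equal; ring.
Qed.

Lemma dot_self_pos (d : pt) : d <> (0, 0) -> dot d d > 0.
Proof.
  intros Hd. destruct d as [x y]; unfold dot; cbn [fst snd].
  destruct (Req_dec x 0) as [Ex|Ex].
  - assert (Ey : y <> 0) by (intro; subst; apply Hd; reflexivity).
    pose proof (sq_pos y Ey). nra.
  - pose proof (sq_pos x Ex). nra.
Qed.

Lemma collinear_on_line (p q Z : pt) : p <> q ->
  cross (vsub q p) (vsub Z p) = 0 -> on_line p q Z.
Proof.
  intros Hpq Hc. pose proof (dot_self_pos _ (vsub_nonzero p q Hpq)) as Hd.
  destruct p as [px py], q as [qx qy], Z as [zx zy].
  unfold on_line, cross, dot, vsub, vadd, vscale in *; cbn [fst snd] in *.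
  set (D := (qx - px) * (qx - px) + (qy - py) * (qy - py)) in *.
  set (Nn := (zx - px) * (qx - px) + (zy - py) * (qy - py)).
  assert (HD : D <> 0) by lra.
  exists (Nn / D). f_equal; apply (Rmult_eq_reg_r D); try exact HD.
  - replace ((px + Nn / D * (qx - px)) * D) with (px * D + Nn * (qx - px)) by (field; exact HD).
    assert (E : zx * D - (px * D + Nn * (qx - px)) =
                -(qy - py) * ((qx - px) * (zy - py) - (qy - py) * (zx - px))) by (unfold D, Nn; ring).
    rewrite Hc in E. lra.
  - replace ((py + Nn / D * (qy - py)) * D) with (py * D + Nn * (qy - py)) by (field; exact HD).
    assert (E : zy * D - (py * D + Nn * (qy - py)) =
                (qx - px) * ((qx - px) * (zy - py) - (qy - py) * (zx - px))) by (unfold D, Nn; ring).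
    rewrite Hc in E. lra.
Qed.

Lemma smaller_ellipse_inside (a b A B : R) (K : pt) : 0 < A < a -> 0 < B < b ->
  on_ellipse A B K -> ellq a b K < 1.
Proof.
  intros HA HB HK. change (ellq A B K = 1) in HK. rewrite <- HK.
  apply ellq_antitone_strict; auto.
  intro E. rewrite E in HK. unfold ellq in HK; cbn [fst snd] in HK.
  unfold Rdiv in HK. rewrite pow_i, !Rmult_0_l in HK by lia. lra.
Qed.

(* The caustic of a billiard trajectory is strictly smaller than E: otherwise
   the midpoint of a chord, which is inside E, would be inside the caustic. *)
Lemma caustic_smaller (a b A B : R) (p q : pt) : a > 0 -> b > 0 ->
  confocal a b A B -> on_ellipse a b p -> on_ellipse a b q ->
  line_tangent_to_ellipse A B p q -> 0 < A < a /\ 0 < B < b.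
Proof.
  intros Ha Hb [HAB [HB Hc]] Hp Hq Ht.
  assert (HAa : A < a).
  { destruct (Rlt_or_le A a) as [|HaA]; [assumption | exfalso].
    assert (HbB : b <= B) by nra.
    set (M := vadd p (vscale (1/2) (vsub q p))).
    assert (HMa : ellq a b M < 1).
    { unfold M. rewrite ellq_chord.
      change (ellq a b p = 1) in Hp. change (ellq a b q = 1) in Hq. rewrite Hp, Hq.
      pose proof (ellq_pos a b (vsub q p) Ha Hb (vsub_nonzero p q (proj1 Ht))). nra. }
    pose proof (ellq_antitone a b A B M (conj Ha HaA) (conj Hb HbB)).
    apply (interior_point_not_tangent A B p q M); try lra.
    - exact (proj1 Ht).
    - exists (1/2); reflexivity.
    - exact Ht. }
  split; [lra | split; [lra | nra]].
Qed.

(* A tangent line leaves the whole ellipse on the same side as the centre O: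
   a point K of the ellipse strictly on the other side would give a point of
   the segment OK, inside the ellipse, on the line. *)
Lemma tangent_line_side (A B : R) (p q K : pt) : A > 0 -> B > 0 ->
  line_tangent_to_ellipse A B p q -> on_ellipse A B K ->
  cross (vsub q p) (vsub K p) * cross p q >= 0.
Proof.
  intros HA HB Ht HK. apply Rnot_lt_ge. intro Hn.
  set (cK := cross (vsub q p) (vsub K p)) in *. set (cO := cross p q) in *.
  assert (HO : cO^2 > 0) by (apply sq_pos; intro E; rewrite E in Hn; lra).
  set (D := cO^2 - cO * cK).
  assert (HD : D > cO^2) by (unfold D; nra).
  set (l := cO^2 / D).
  assert (Hl : 0 < l < 1).
  { split; [apply Rdiv_lt_0_compat; lra|].
    apply (Rmult_lt_reg_r D); [lra|]. unfold l, Rdiv. rewrite Rmult_assoc, Rinv_l; lra. }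
  set (Z := vscale l K).
  apply (interior_point_not_tangent A B p q Z HA HB (proj1 Ht)); [| | exact Ht].
  - apply collinear_on_line; [exact (proj1 Ht)|].
    replace (cross (vsub q p) (vsub Z p)) with (l * (cK - cO) + cO)
      by (unfold cK, cO, Z, cross, vsub, vscale; cbn [fst snd]; ring).
    unfold l, D. field. fold D. lra.
  - change (ellq A B K = 1) in HK.
    replace (ellq A B Z) with (l^2 * ellq A B K) by (unfold Z, ellq, vscale; cbn [fst snd]; unfold Rdiv; ring).
    rewrite HK. nra.
Qed.

Lemma sin_eq_0_small (z : R) : - PI < z < PI -> sin z = 0 -> z = 0.
Proof.
  intros [H1 H2] Hs. destruct (Rtotal_order z 0) as [Hl|[He|Hg]]; auto.
  - assert (0 < sin (-z)) by (apply sin_gt_0; lra). rewrite sin_neg in H. lra.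
  - assert (0 < sin z) by (apply sin_gt_0; lra). lra.
Qed.

(* If K + m > 0 > K - m, the equation K + m cos θ + n sin θ = 0 has at most one
   root θ in (0, π): in terms of the half angle it is a quadratic form in
   (cos(θ/2), sin(θ/2)) of negative discriminant along the open quadrant. *)
Lemma trig_root_unique (K m n t1 t2 : R) : 0 < t1 < PI -> 0 < t2 < PI ->
  K + m > 0 -> K - m < 0 ->
  K + m * cos t1 + n * sin t1 = 0 -> K + m * cos t2 + n * sin t2 = 0 -> t1 = t2.
Proof.
  intros Ht1 Ht2 Hp Hm E1 E2.
  replace t1 with (2 * (t1/2)) in E1 by field. replace t2 with (2 * (t2/2)) in E2 by field.
  rewrite cos_2a, sin_2a in E1, E2.
  assert (S1 : 0 < sin (t1/2)) by (apply sin_gt_0; lra).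
  assert (S2 : 0 < sin (t2/2)) by (apply sin_gt_0; lra).
  assert (C1 : 0 < cos (t1/2)) by (apply cos_gt_0; lra).
  assert (C2 : 0 < cos (t2/2)) by (apply cos_gt_0; lra).
  pose proof (sin2_cos2 (t1/2)) as P1. pose proof (sin2_cos2 (t2/2)) as P2. unfold Rsqr in P1, P2.
  set (s1 := sin (t1/2)) in *. set (s2 := sin (t2/2)) in *.
  set (c1 := cos (t1/2)) in *. set (c2 := cos (t2/2)) in *.
  assert (F1 : (K+m)*c1*c1 + 2*n*s1*c1 + (K-m)*s1*s1 = 0).
  { transitivity (K*(s1*s1+c1*c1) + m*(c1*c1 - s1*s1) + n*(2*s1*c1)); [ring|]. rewrite P1. lra. }
  assert (F2 : (K+m)*c2*c2 + 2*n*s2*c2 + (K-m)*s2*s2 = 0).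
  { transitivity (K*(s2*s2+c2*c2) + m*(c2*c2 - s2*s2) + n*(2*s2*c2)); [ring|]. rewrite P2. lra. }
  assert (Fz : (c1*s2 - c2*s1) * ((K+m)*c1*c2 - (K-m)*s1*s2) = 0).
  { transitivity (((K+m)*c1*c1 + 2*n*s1*c1 + (K-m)*s1*s1) * (s2*c2)
                  - ((K+m)*c2*c2 + 2*n*s2*c2 + (K-m)*s2*s2) * (s1*c1)); [ring|].
    rewrite F1, F2; ring. }
  assert (Pos : (K+m)*c1*c2 - (K-m)*s1*s2 > 0).
  { assert (0 < (K+m)*c1*c2) by (apply Rmult_lt_0_compat; [apply Rmult_lt_0_compat|]; lra).
    assert (0 < -(K-m)*s1*s2) by (apply Rmult_lt_0_compat; [apply Rmult_lt_0_compat|]; lra). lra. }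
  assert (Hs : sin (t2/2 - t1/2) = 0).
  { rewrite sin_minus. fold s1 s2 c1 c2.
    destruct (Rmult_integral _ _ Fz) as [E|E]; lra. }
  apply sin_eq_0_small in Hs; lra.
Qed.

(* If the chord between the points of eccentric angles x and y of E is tangent
   to the ellipse x²/A²+y²/B²=1, then (1 - cos(y - x)) * tangency_fn x y = 0
   (see chord_tangency_trig). *)
Definition tangency_fn (a b A B x y : R) : R :=
  a^2*b^2*(1 + cos (y - x)) - A^2*b^2*(1 + cos (x + y)) - B^2*a^2*(1 - cos (x + y)).

(* [caustic_step x y]: y is the eccentric angle following x along a billiard
   orbit, i.e. y lies in (x, x + π) and the chord is tangent to the caustic. *)
Definition caustic_step (a b A B x y : R) : Prop :=
  x < y < x + PI /\ tangency_fn a b A B x y = 0.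

Lemma tangency_fn_shift (a b A B x y : R) :
  tangency_fn a b A B (x + PI) (y + PI) = tangency_fn a b A B x y.
Proof.
  unfold tangency_fn. replace (y + PI - (x + PI)) with (y - x) by ring.
  replace (x + PI + (y + PI)) with ((x + y) + 2 * INR 1 * PI) by (simpl; ring).
  rewrite cos_period. ring.
Qed.

Lemma caustic_step_shift (a b A B x y : R) :
  caustic_step a b A B x y -> caustic_step a b A B (x + PI) (y + PI).
Proof. intros [H1 H2]. split; [lra|]. rewrite tangency_fn_shift. exact H2. Qed.

Lemma tangency_fn_fwd (a b A B x th : R) : tangency_fn a b A B x (x + th) =
  (a^2*b^2 - A^2*b^2 - B^2*a^2) + (a^2*b^2 - (A^2*b^2 - B^2*a^2)*cos (2*x)) * cos th
  + ((A^2*b^2 - B^2*a^2)*sin (2*x)) * sin th.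
Proof.
  unfold tangency_fn. replace (x + th - x) with th by ring.
  replace (x + (x + th)) with (2*x + th) by ring. rewrite cos_plus. ring.
Qed.

Lemma tangency_fn_bwd (a b A B y th : R) : tangency_fn a b A B (y - th) y =
  (a^2*b^2 - A^2*b^2 - B^2*a^2) + (a^2*b^2 - (A^2*b^2 - B^2*a^2)*cos (2*y)) * cos th
  + (-(A^2*b^2 - B^2*a^2)*sin (2*y)) * sin th.
Proof.
  unfold tangency_fn. replace (y - (y - th)) with th by ring.
  replace (y - th + y) with (2*y - th) by ring. rewrite cos_minus. ring.
Qed.

Lemma tangency_fn_continuous_r (a b A B x : R) : continuity (fun y => tangency_fn a b A B x y).
Proof. apply derivable_continuous. unfold tangency_fn. reg. Qed.

Lemma tangency_fn_continuous_l (a b A B y : R) : continuity (fun x => tangency_fn a b A B x y).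
Proof. apply derivable_continuous. unfold tangency_fn. reg. Qed.

Lemma pos_combination (al be u v : R) : al > 0 -> be > 0 -> 0 <= u -> 0 <= v -> u + v > 0 ->
  al * u + be * v > 0.
Proof.
  intros. destruct (Rlt_or_le 0 u).
  - assert (0 < al * u) by (apply Rmult_lt_0_compat; lra). nra.
  - assert (0 < be * v) by (apply Rmult_lt_0_compat; lra). nra.
Qed.

Section CausticSteps.
Variables a b A B : R.
Hypotheses (HA : 0 < A < a) (HB : 0 < B < b).

Lemma tangency_fn_diag (x : R) : tangency_fn a b A B x x > 0.
Proof.
  unfold tangency_fn. replace (x - x) with 0 by ring. rewrite cos_0.
  pose proof (COS_bound (x + x)).
  replace (a^2*b^2*(1+1) - A^2*b^2*(1 + cos (x+x)) - B^2*a^2*(1 - cos (x+x)))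
    with ((a^2*b^2 - A^2*b^2) * (1 + cos (x+x)) + (a^2*b^2 - B^2*a^2) * (1 - cos (x+x))) by ring.
  apply pos_combination; try lra.
  - assert (A^2 < a^2) by nra. assert (b^2 > 0) by nra. nra.
  - assert (B^2 < b^2) by nra. assert (a^2 > 0) by nra. nra.
Qed.

(* ... and negative at the antipode y = x + π, whose chord is a diameter and
   passes through the centre, inside the caustic. *)
Lemma tangency_fn_antipodal (x : R) : tangency_fn a b A B x (x + PI) < 0.
Proof.
  unfold tangency_fn. replace (x + PI - x) with PI by ring. rewrite cos_PI.
  pose proof (COS_bound (x + (x + PI))).
  replace (a^2*b^2*(1 + -1) - A^2*b^2*(1 + cos (x+(x+PI))) - B^2*a^2*(1 - cos (x+(x+PI))))
    with (- ((A^2*b^2) * (1 + cos (x+(x+PI))) + (B^2*a^2) * (1 - cos (x+(x+PI))))) by ring.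
  apply Ropp_lt_gt_0_contravar. apply pos_combination; try lra;
    apply Rmult_lt_0_compat; nra.
Qed.

Lemma caustic_step_functional (x y1 y2 : R) :
  caustic_step a b A B x y1 -> caustic_step a b A B x y2 -> y1 = y2.
Proof.
  intros [H1 E1] [H2 E2].
  pose proof (tangency_fn_diag x) as D0. pose proof (tangency_fn_antipodal x) as Dpi.
  replace x with (x + 0) in D0 at 2 by ring.
  rewrite tangency_fn_fwd, cos_0, sin_0 in D0. rewrite tangency_fn_fwd, cos_PI, sin_PI in Dpi.
  replace y1 with (x + (y1 - x)) in E1 by ring. replace y2 with (x + (y2 - x)) in E2 by ring.
  rewrite tangency_fn_fwd in E1, E2.
  assert (y1 - x = y2 - x) by (eapply trig_root_unique; [| | | | exact E1 | exact E2]; lra).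
  lra.
Qed.

Lemma caustic_step_injective (x1 x2 y : R) :
  caustic_step a b A B x1 y -> caustic_step a b A B x2 y -> x1 = x2.
Proof.
  intros [H1 E1] [H2 E2].
  pose proof (tangency_fn_diag y) as D0. pose proof (tangency_fn_antipodal (y - PI)) as Dpi.
  replace y with (y - 0) in D0 at 1 by ring. replace (y - PI + PI) with y in Dpi by ring.
  rewrite tangency_fn_bwd, cos_0, sin_0 in D0. rewrite tangency_fn_bwd, cos_PI, sin_PI in Dpi.
  replace x1 with (y - (y - x1)) in E1 by ring. replace x2 with (y - (y - x2)) in E2 by ring.
  rewrite tangency_fn_bwd in E1, E2.
  assert (y - x1 = y - x2) by (eapply trig_root_unique; [| | | | exact E1 | exact E2]; lra).
  lra.
Qed.

Lemma tangency_fn_neg_after (x y z : R) :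
  caustic_step a b A B x y -> y < z < x + PI -> tangency_fn a b A B x z < 0.
Proof.
  intros Hxy Hz. apply Rnot_le_lt. intro Hge. pose proof Hxy as [Hlt _].
  destruct (Req_dec (tangency_fn a b A B x z) 0) as [E|E].
  - assert (y = z) by (apply (caustic_step_functional x); [|split]; auto; lra). lra.
  - destruct (IVT (fun w => - tangency_fn a b A B x w) z (x + PI)) as [w [Hw Ew]].
    + apply continuity_opp, tangency_fn_continuous_r.
    + lra.
    + lra.
    + pose proof (tangency_fn_antipodal x). lra.
    + pose proof (tangency_fn_antipodal x).
      assert (w <> x + PI) by (intro; subst w; lra).
      assert (y = w) by (apply (caustic_step_functional x); [|split]; auto; lra). lra.
Qed.

Lemma tangency_fn_pos_between (x y z : R) :
  caustic_step a b A B x y -> x < z < y -> tangency_fn a b A B z y > 0.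
Proof.
  intros Hxy Hz. apply Rnot_le_lt. intro Hle. pose proof Hxy as [Hlt _].
  destruct (Req_dec (tangency_fn a b A B z y) 0) as [E|E].
  - assert (x = z) by (apply (caustic_step_injective x z y); [|split]; auto; lra). lra.
  - destruct (IVT (fun w => tangency_fn a b A B w y) z y) as [w [Hw Ew]].
    + apply tangency_fn_continuous_l.
    + lra.
    + lra.
    + pose proof (tangency_fn_diag y). lra.
    + pose proof (tangency_fn_diag y). assert (w <> y) by (intro; subst w; lra).
      assert (x = w) by (apply (caustic_step_injective x w y); [|split]; auto; lra). lra.
Qed.

Lemma caustic_step_monotone (x y x' y' : R) :
  caustic_step a b A B x y -> caustic_step a b A B x' y' -> x < x' < y -> y < y'.
Proof.
  intros Hv Hv' Hx.
  destruct (Rtotal_order y y') as [|[E|Hg]]; [assumption | exfalso | exfalso].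
  - subst y'. assert (x = x') by (apply (caustic_step_injective x x' y); auto). lra.
  - pose proof Hv as [H _].
    pose proof (tangency_fn_neg_after x' y' y Hv' ltac:(lra)).
    pose proof (tangency_fn_pos_between x y x' Hv Hx). lra.
Qed.

End CausticSteps.

(* An orbit of caustic steps whose eccentric angles advance by 2π per period
   N is invariant under the half turn when N is even: the half-turned
   orbit (t_i + π) is again an orbit of caustic steps, so by uniqueness of
   successors it either coincides with a shift (t_{k+i}) of the orbit or
   interlaces with it forever, and the latter forces N = 2k + 1. *)
Section HalfTurn.
Variables (a b A B : R) (N : nat) (t : nat -> R).
Hypotheses (HA : 0 < A < a) (HB : 0 < B < b).
Hypothesis Hstep : forall i, caustic_step a b A B (t i) (t (S i)).
Hypothesis Hper : forall i, t (i + N)%nat = t i + 2*PI.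

Lemma angle_increasing (i j : nat) : (i < j)%nat -> t i < t j.
Proof.
  induction 1 as [|j _ IH]; [apply (Hstep i)|]. pose proof (proj1 (Hstep j)). lra.
Qed.

Lemma angle_lt_index (i j : nat) : t i < t j -> (i < j)%nat.
Proof.
  intros E. destruct (Nat.lt_trichotomy i j) as [H|[H|H]]; auto.
  - subst; lra.
  - apply angle_increasing in H; lra.
Qed.

Lemma angle_injective (i j : nat) : t i = t j -> i = j.
Proof.
  intros E. destruct (Nat.lt_trichotomy i j) as [H|[H|H]]; auto;
    apply angle_increasing in H; lra.
Qed.

Lemma angle_bracket (c : R) (n : nat) : t 0 <= c -> c < t n -> exists k, t k <= c < t (S k).
Proof.
  induction n as [|n IH]; intros H1 H2; [lra|].
  destruct (Rlt_or_le c (t n)); [apply IH; auto | exists n; auto].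
Qed.

Lemma half_turn_aligned (k : nat) : t k = t 0 + PI -> forall j, t (k + j)%nat = t j + PI.
Proof.
  intros E. induction j as [|j IH]; [rewrite Nat.add_0_r; exact E|].
  replace (k + S j)%nat with (S (k + j)) by lia.
  symmetry. apply (caustic_step_functional a b A B HA HB (t j + PI)).
  - apply caustic_step_shift, Hstep.
  - rewrite <- IH. apply Hstep.
Qed.

Lemma half_turn_interlaced (k : nat) : t k < t 0 + PI < t (S k) ->
  forall j, t (k + j)%nat < t j + PI < t (S (k + j)).
Proof.
  intros Hk. induction j as [|j [I1 I2]]; [rewrite Nat.add_0_r; exact Hk|].
  replace (k + S j)%nat with (S (k + j)) by lia.
  assert (J1 : t (S (k + j)) < t (S j) + PI).
  { apply (caustic_step_monotone a b A B HA HB (t (k + j)%nat) _ (t j + PI));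
      [apply Hstep | apply caustic_step_shift, Hstep | lra]. }
  split; [exact J1|].
  apply (caustic_step_monotone a b A B HA HB (t j + PI) _ (t (S (k + j))));
    [apply caustic_step_shift, Hstep | apply Hstep | lra].
Qed.

Lemma half_turn_shift : Nat.Even N ->
  exists k, N = (k + k)%nat /\ forall i, t (k + i)%nat = t i + PI.
Proof.
  intros [h Hh]. pose proof PI_RGT_0.
  assert (HN : t N = t 0 + 2*PI) by (rewrite <- (Hper 0); reflexivity).
  destruct (angle_bracket (t 0 + PI) N) as [k [Hk1 Hk2]]; [lra | lra |].
  destruct (Req_dec (t k) (t 0 + PI)) as [E|E].
  - pose proof (half_turn_aligned k E) as Hj. exists k. split; [|exact Hj].
    apply angle_injective. rewrite HN, Hj. lra.
  - exfalso. pose proof (half_turn_interlaced k ltac:(lra)) as Hj.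
    destruct (Hj 0%nat) as [_ J0]. destruct (Hj k) as [Jk _].
    destruct (Hj (S k)) as [_ Jk1]. rewrite Nat.add_0_r in J0.
    assert (L1 : t (k + k)%nat < t N) by lra.
    assert (L2 : t N < t (S (k + S k))) by lra.
    apply angle_lt_index in L1. apply angle_lt_index in L2. lia.
Qed.

End HalfTurn.

Lemma sin_pos_range (z : R) : - PI < z < 2*PI -> sin z > 0 -> 0 < z < PI.
Proof.
  intros [H1 H2] Hs. pose proof PI_RGT_0. split.
  - apply Rnot_le_lt. intro Hz. assert (W : 0 <= sin (-z)) by (apply sin_ge_0; lra).
    rewrite sin_neg in W. lra.
  - apply Rnot_le_lt. intro Hz. assert (W : 0 <= sin (z - PI)) by (apply sin_ge_0; lra).
    pose proof (neg_sin (z - PI)) as E. replace (z - PI + PI) with z in E by ring. lra.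
Qed.

Lemma sin_eq_0_cos (z : R) : 0 < z < 2*PI -> sin z = 0 -> cos z = -1.
Proof.
  intros Hz Hs. pose proof (neg_sin (z - PI)) as E. replace (z - PI + PI) with z in E by ring.
  assert (Hs' : sin (z - PI) = 0) by lra.
  apply sin_eq_0_small in Hs'; [|lra]. replace z with PI by lra. apply cos_PI.
Qed.

Lemma cos_lt_1 (z : R) : 0 < z < PI -> cos z < 1.
Proof.
  intros Hz. replace z with (2*(z/2)) by field. rewrite cos_2a_sin.
  assert (0 < sin (z/2)) by (apply sin_gt_0; lra). nra.
Qed.

Lemma cos2_sin2 (x : R) : cos x ^ 2 + sin x ^ 2 = 1.
Proof. pose proof (sin2_cos2 x) as H. unfold Rsqr in H. lra. Qed.

(* The eccentric angle of a point X of E with polar angle ph: the rotation by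
   -ph of (x/a, y/b) is the unit vector (kappa, nu) with kappa > 0, so the
   eccentric angle is ph + atan (nu/kappa).  This choice is explicit, hence
   shifts by exactly 2π with ph. *)
Definition ecc_kappa (a b : R) (X : pt) (ph : R) : R := (fst X/a)*cos ph + (snd X/b)*sin ph.
Definition ecc_nu (a b : R) (X : pt) (ph : R) : R := (snd X/b)*cos ph - (fst X/a)*sin ph.
Definition ecc_angle (a b : R) (X : pt) (ph : R) : R :=
  ph + atan (ecc_nu a b X ph / ecc_kappa a b X ph).

Lemma ecc_angle_period (a b : R) (X : pt) (ph : R) :
  ecc_angle a b X (ph + 2*PI) = ecc_angle a b X ph + 2*PI.
Proof.
  unfold ecc_angle, ecc_kappa, ecc_nu.
  replace (ph + 2*PI) with (ph + 2 * INR 1 * PI) by (simpl; ring).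
  rewrite cos_period, sin_period. simpl. ring.
Qed.

Lemma ecc_angle_spec (a b : R) (X : pt) (r ph : R) : a > 0 -> b > 0 -> r > 0 ->
  on_ellipse a b X -> X = (r * cos ph, r * sin ph) ->
  a * cos (ecc_angle a b X ph) = fst X /\ b * sin (ecc_angle a b X ph) = snd X /\
  - PI/2 < ecc_angle a b X ph - ph < PI/2.
Proof.
  intros Ha Hb Hr HX HP.
  set (k := ecc_kappa a b X ph). set (n := ecc_nu a b X ph).
  pose proof (cos2_sin2 ph) as Pc.
  assert (Hk : k > 0).
  { unfold k, ecc_kappa. rewrite HP; cbn [fst snd].
    replace (r * cos ph / a * cos ph + r * sin ph / b * sin ph)
      with (r * (/a * cos ph^2 + /b * sin ph^2)) by (field; lra).
    apply Rmult_lt_0_compat; [exact Hr|].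
    apply pos_combination; try apply Rinv_0_lt_compat; try apply pow2_ge_0; lra. }
  assert (Hkn : k^2 + n^2 = 1).
  { unfold k, n, ecc_kappa, ecc_nu. change (ellq a b X = 1) in HX. unfold ellq in HX.
    transitivity ((fst X^2/a^2 + snd X^2/b^2) * (cos ph ^ 2 + sin ph ^ 2)); [field; lra|].
    rewrite HX, Pc. ring. }
  assert (Hsq : sqrt (1 + (n/k)²) = 1/k).
  { replace (1 + (n/k)²) with ((1/k)*(1/k))
      by (unfold Rsqr; transitivity ((k^2+n^2)/(k*k)); [rewrite Hkn|]; field; lra).
    apply sqrt_square. left. unfold Rdiv; rewrite Rmult_1_l; apply Rinv_0_lt_compat; lra. }
  assert (Hcd : cos (atan (n/k)) = k) by (rewrite cos_atan, Hsq; field; lra).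
  assert (Hsd : sin (atan (n/k)) = n) by (rewrite sin_atan, Hsq; field; lra).
  unfold ecc_angle. fold k n. rewrite cos_plus, sin_plus, Hcd, Hsd.
  pose proof (atan_bound (n/k)).
  repeat split; try lra; unfold k, n, ecc_kappa, ecc_nu.
  - transitivity (fst X * (cos ph ^ 2 + sin ph ^ 2)); [field; lra|]. rewrite Pc; ring.
  - transitivity (snd X * (cos ph ^ 2 + sin ph ^ 2)); [field; lra|]. rewrite Pc; ring.
Qed.

Lemma chord_tangency_trig (a b A B x y : R) :
  A^2 * (b * sin y - b * sin x)^2 + B^2 * (a * cos y - a * cos x)^2
  - (a * cos x * (b * sin y) - b * sin x * (a * cos y))^2 =
  - (1 - cos (y - x)) * tangency_fn a b A B x y.
Proof.
  unfold tangency_fn. rewrite cos_minus, cos_plus.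
  pose proof (cos2_sin2 x) as Hx. pose proof (cos2_sin2 y) as Hy.
  set (cx := cos x) in *. set (sx := sin x) in *. set (cy := cos y) in *. set (sy := sin y) in *.
  assert (E1 : (sy - sx)^2 = (1 - (cy*cx + sy*sx))*(1 + (cx*cy - sx*sy))).
  { transitivity ((1 - (cy*cx + sy*sx))*(1 + (cx*cy - sx*sy))
                  + (cx^2+sx^2-1)*cy^2 + (cy^2+sy^2-1)*(1-sx^2)); [ring|].
    rewrite Hx, Hy. ring. }
  assert (E2 : (cy - cx)^2 = (1 - (cy*cx + sy*sx))*(1 - (cx*cy - sx*sy))).
  { transitivity ((1 - (cy*cx + sy*sx))*(1 - (cx*cy - sx*sy))
                  + (cx^2+sx^2-1)*sy^2 + (cy^2+sy^2-1)*(1-cx^2)); [ring|].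
    rewrite Hx, Hy. ring. }
  assert (E3 : (sy*cx - cy*sx)^2 = (1 - (cy*cx + sy*sx))*(1 + (cy*cx + sy*sx))).
  { transitivity ((1 - (cy*cx + sy*sx))*(1 + (cy*cx + sy*sx))
                  + (cx^2+sx^2-1)*(cy^2+sy^2) + (cy^2+sy^2-1)); [ring|].
    rewrite Hx, Hy. ring. }
  transitivity (A^2*b^2*(sy-sx)^2 + B^2*a^2*(cy-cx)^2 - a^2*b^2*(sy*cx - cy*sx)^2); [ring|].
  rewrite E1, E2, E3. ring.
Qed.

Lemma tangency_point_on_chord (a b A B : R) (X Y : pt) : 0 < A < a -> 0 < B < b ->
  on_ellipse a b X -> on_ellipse a b Y -> line_tangent_to_ellipse A B X Y ->
  exists s, 0 < s < 1 /\ on_ellipse A B (vadd X (vscale s (vsub Y X))).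
Proof.
  intros HA HB HX HY [HXY [T [[[s HT] HTe] _]]].
  exists s. split; [|rewrite <- HT; exact HTe].
  pose proof (smaller_ellipse_inside a b A B T HA HB HTe) as Hin.
  rewrite HT, ellq_chord in Hin.
  change (ellq a b X = 1) in HX. change (ellq a b Y = 1) in HY. rewrite HX, HY in Hin.
  pose proof (ellq_pos a b (vsub Y X) ltac:(lra) ltac:(lra) (vsub_nonzero X Y HXY)).
  assert (Hs : s * (s - 1) < 0) by nra.
  nra.
Qed.

Section Billiard.
Variables (a b A B : R) (N : nat) (P : nat -> pt) (r phi : nat -> R).
Hypotheses (Ha : a > 0) (Hb : b > 0) (HN : (3 <= N)%nat).
Hypothesis Hper : forall i, P (i + N)%nat = P i.
Hypothesis Hell : forall i, on_ellipse a b (P i).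
Hypothesis Hneq : forall i, P i <> P (S i).
Hypothesis Hr : forall i, r i > 0.
Hypothesis Hpol : forall i, P i = (r i * cos (phi i), r i * sin (phi i)).
Hypothesis Hinc : forall i, phi i < phi (S i).
Hypothesis Hphiper : forall i, phi (i + N)%nat = phi i + 2 * PI.
Hypothesis Hconv : forall i, cross (vsub (P (S i)) (P i)) (vsub (P (S (S i))) (P (S i))) >= 0.
Hypothesis Hconf : confocal a b A B.
Hypothesis Htan : forall i, line_tangent_to_ellipse A B (P i) (P (S i)).

Lemma caustic_axes : 0 < A < a /\ 0 < B < b.
Proof. exact (caustic_smaller a b A B (P 0%nat) (P 1%nat) Ha Hb Hconf (Hell _) (Hell _) (Htan _)). Qed.

Lemma polar_two_steps (i : nat) : 0 < phi (S (S i)) - phi i < 2 * PI.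
Proof.
  assert (Hmono : forall j k, (j < k)%nat -> phi j < phi k).
  { intros j k H. induction H; [apply Hinc|]. pose proof (Hinc m). lra. }
  pose proof (Hmono i (S (S i)) ltac:(lia)). pose proof (Hmono (S (S i)) (i + N)%nat ltac:(lia)).
  rewrite Hphiper in *. lra.
Qed.

Lemma cross_polar (i j : nat) : cross (P i) (P j) = r i * r j * sin (phi j - phi i).
Proof. rewrite (Hpol i), (Hpol j). unfold cross; cbn [fst snd]. rewrite sin_minus. ring. Qed.

(* Vertices two apart are distinct: otherwise they would be at polar angles
   differing by π, i.e. on opposite sides of O. *)
Lemma vertices_two_apart_distinct (i : nat) : P i <> P (S (S i)).
Proof.
  intros E. pose proof (polar_two_steps i) as Hd.
  pose proof (Hr i). pose proof (Hr (S (S i))).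
  assert (Hrr : r i * r (S (S i)) > 0) by (apply Rmult_lt_0_compat; lra).
  assert (Hs : sin (phi (S (S i)) - phi i) = 0).
  { apply (Rmult_eq_reg_l (r i * r (S (S i)))); [|lra].
    rewrite <- cross_polar, <- E. unfold cross; ring. }
  apply sin_eq_0_cos in Hs; [|exact Hd].
  assert (Hdot : dot (P i) (P (S (S i))) = - (r i * r (S (S i)))).
  { rewrite (Hpol i), (Hpol (S (S i))). unfold dot; cbn [fst snd].
    rewrite cos_minus in Hs.
    transitivity (r i * r (S (S i)) *
      (cos (phi (S (S i))) * cos (phi i) + sin (phi (S (S i))) * sin (phi i))); [ring|].
    rewrite Hs; ring. }
  rewrite <- E in Hdot. unfold dot in Hdot. nra.
Qed.

(* If O were on the
   line of side i, that line would meet the inside of the caustic; if O were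
   strictly to its right, the caustic -- which touches side i+1 inside the
   chord -- would by convexity lie on the line of side i, forcing three
   collinear vertices. *)
Lemma origin_left_of_sides (i : nat) : cross (P i) (P (S i)) > 0.
Proof.
  destruct caustic_axes as [HA HB].
  apply Rnot_le_lt. intro Hle.
  set (X := P i) in *. set (Y := P (S i)) in *. set (Z := P (S (S i))) in *.
  destruct (Req_dec (cross X Y) 0) as [E|E].
  - apply (interior_point_not_tangent A B X Y (0, 0)); try lra; [apply Hneq | | | apply Htan].
    + apply collinear_on_line; [apply Hneq|].
      transitivity (cross X Y); [unfold cross, vsub; cbn [fst snd]; ring | exact E].
    + unfold ellq; cbn [fst snd]. unfold Rdiv. rewrite pow_i by lia. lra.
  - destruct (tangency_point_on_chord a b A B Y Z HA HB (Hell _) (Hell _) (Htan (S i)))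
      as [s [Hs HT]].
    pose proof (tangent_line_side A B X Y _ (proj1 HA) (proj1 HB) (Htan i) HT) as Hside.
    replace (cross (vsub Y X) (vsub (vadd Y (vscale s (vsub Z Y))) X))
      with (s * cross (vsub Y X) (vsub Z Y)) in Hside
      by (unfold cross, vsub, vadd, vscale; cbn [fst snd]; ring).
    pose proof (Hconv i) as Hc. fold X Y Z in Hc.
    assert (HXY : cross X Y < 0) by lra.
    assert (Hsc : s * cross (vsub Y X) (vsub Z Y) <= 0)
      by (apply Rnot_lt_le; intro; nra).
    assert (Hturn : cross (vsub Y X) (vsub Z Y) = 0) by nra.
    apply (ellipse_no_three_collinear a b X Y Z Ha Hb (Hell _) (Hell _) (Hell _)
             (Hneq i) (vertices_two_apart_distinct i) (Hneq (S i))).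
    apply collinear_on_line; [apply Hneq|].
    transitivity (cross (vsub Y X) (vsub Z Y)); [unfold cross, vsub; cbn [fst snd]; ring | exact Hturn].
Qed.

Definition ecc (i : nat) : R := ecc_angle a b (P i) (phi i).

Lemma ecc_spec (i : nat) :
  a * cos (ecc i) = fst (P i) /\ b * sin (ecc i) = snd (P i) /\ - PI/2 < ecc i - phi i < PI/2.
Proof. exact (ecc_angle_spec a b (P i) (r i) (phi i) Ha Hb (Hr i) (Hell i) (Hpol i)). Qed.

Lemma cross_ecc (i j : nat) : cross (P i) (P j) = a * b * sin (ecc j - ecc i).
Proof.
  destruct (ecc_spec i) as [E1 [E2 _]]. destruct (ecc_spec j) as [E3 [E4 _]].
  unfold cross. rewrite <- E1, <- E2, <- E3, <- E4, sin_minus. ring.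
Qed.

(* Each side subtends a polar angle in (0, π), since O lies to its left ... *)
Lemma polar_step_bounds (i : nat) : 0 < phi (S i) - phi i < PI.
Proof.
  apply sin_pos_range.
  - pose proof (Hinc i). pose proof (polar_two_steps i). pose proof (Hinc (S i)). lra.
  - pose proof (origin_left_of_sides i) as L. rewrite cross_polar in L.
    pose proof (Hr i). pose proof (Hr (S i)).
    assert (r i * r (S i) > 0) by (apply Rmult_lt_0_compat; lra). nra.
Qed.

(* ... and so does the eccentric angle, which stays within π/2 of the polar one. *)
Lemma ecc_step_bounds (i : nat) : 0 < ecc (S i) - ecc i < PI.
Proof.
  apply sin_pos_range.
  - pose proof (polar_step_bounds i).
    destruct (ecc_spec i) as [_ [_ B1]]. destruct (ecc_spec (S i)) as [_ [_ B2]]. lra.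
  - pose proof (origin_left_of_sides i) as L. rewrite cross_ecc in L.
    assert (a * b > 0) by (apply Rmult_lt_0_compat; lra). nra.
Qed.

(* Consecutive eccentric angles form a caustic step: the tangency equation of
   side i, rewritten in eccentric angles, is (1 - cos(t_{i+1} - t_i)) *
   tangency_fn t_i t_{i+1} = 0, and the first factor is nonzero. *)
Lemma ecc_caustic_step (i : nat) : caustic_step a b A B (ecc i) (ecc (S i)).
Proof.
  pose proof (ecc_step_bounds i) as Hstep. split; [lra|].
  destruct caustic_axes as [HA HB].
  pose proof (tangent_line_equation A B (P i) (P (S i)) (proj1 HA) (proj1 HB) (Htan i)) as TR.
  destruct (ecc_spec i) as [E1 [E2 _]]. destruct (ecc_spec (S i)) as [E3 [E4 _]].
  unfold cross in TR. rewrite <- E1, <- E2, <- E3, <- E4 in TR.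
  pose proof (chord_tangency_trig a b A B (ecc i) (ecc (S i))) as ID.
  pose proof (cos_lt_1 _ Hstep).
  assert (Hz : (1 - cos (ecc (S i) - ecc i)) * tangency_fn a b A B (ecc i) (ecc (S i)) = 0) by lra.
  destruct (Rmult_integral _ _ Hz); [lra | assumption].
Qed.

Lemma ecc_period (i : nat) : ecc (i + N)%nat = ecc i + 2 * PI.
Proof. unfold ecc. rewrite Hper, Hphiper. apply ecc_angle_period. Qed.

Lemma central_symmetry : Nat.Even N ->
  exists k, N = (k + k)%nat /\ forall i, P (k + i)%nat = vscale (-1) (P i).
Proof.
  intros Hev. destruct caustic_axes as [HA HB].
  destruct (half_turn_shift a b A B N ecc HA HB ecc_caustic_step ecc_period Hev) as [k [Hk Hsym]].
  exists k. split; [exact Hk|]. intros i.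
  destruct (ecc_spec i) as [E1 [E2 _]]. destruct (ecc_spec (k + i)) as [E3 [E4 _]].
  unfold vscale. rewrite (surjective_pairing (P (k + i)%nat)), <- E1, <- E2, <- E3, <- E4, Hsym, neg_cos, neg_sin.
  f_equal; ring.
Qed.

End Billiard.

Lemma cross_zero_of_common_normal (u v w : pt) : w <> (0, 0) ->
  dot w u = 0 -> dot w v = 0 -> cross u v = 0.
Proof.
  intros Hw H1 H2. pose proof (dot_self_pos w Hw) as Hww.
  destruct u as [ux uy], v as [vx vy], w as [wx wy]; unfold dot, cross in *; cbn [fst snd] in *.
  assert (E : (ux * vy - uy * vx) * (wx * wx + wy * wy) =
              (wx * vy - wy * vx) * (wx * ux + wy * uy) - (wx * uy - wy * ux) * (wx * vx + wy * vy)) by ring.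
  rewrite H1, H2 in E. apply (Rmult_eq_reg_r (wx * wx + wy * wy)); lra.
Qed.

Lemma dot_one_nonzero (w X : pt) : dot w X = 1 -> w <> (0, 0).
Proof. intros H E. rewrite E in H. unfold dot in H; cbn [fst snd] in H. lra. Qed.

Lemma dot_one_collinear (w X Y Z : pt) : dot w X = 1 -> dot w Y = 1 -> dot w Z = 1 ->
  cross (vsub Y X) (vsub Z X) = 0.
Proof.
  intros HX HY HZ. apply (cross_zero_of_common_normal _ _ w (dot_one_nonzero w X HX));
    unfold dot, vsub in *; cbn [fst snd] in *; lra.
Qed.

Lemma on_line_dot_one (w p q Q : pt) : dot w p = 1 -> dot w q = 1 -> on_line p q Q -> dot w Q = 1.
Proof.
  intros Hp Hq [s ->].
  transitivity (dot w p + s * (dot w q - dot w p)); [|rewrite Hp, Hq; ring].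
  unfold dot, vadd, vscale, vsub; cbn [fst snd]. ring.
Qed.

(* [on_tangent a b P X] is symmetric in P and X: it says n(P)·X = 1, and also
   n(X)·P = 1, i.e. P lies on the polar line of X. *)
Lemma on_tangent_normal (a b : R) (P X : pt) : on_tangent a b P X -> dot (ell_normal a b P) X = 1.
Proof. unfold on_tangent, ell_normal, dot; cbn [fst snd]. intros H. rewrite <- H. unfold Rdiv. ring. Qed.

Lemma on_tangent_polar (a b : R) (P X : pt) : on_tangent a b P X -> dot (ell_normal a b X) P = 1.
Proof. unfold on_tangent, ell_normal, dot; cbn [fst snd]. intros H. rewrite <- H. unfold Rdiv. ring. Qed.

Definition foot (f m : pt) : pt := vadd f (vscale ((1 - dot m f) / dot m m) m).

Lemma foot_unique (f m Q : pt) : dot m Q = 1 -> cross (vsub f Q) m = 0 -> Q = foot f m.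
Proof.
  intros H1 H2. pose proof (dot_self_pos m (dot_one_nonzero m Q H1)) as Hm.
  destruct f as [fx fy], m as [mx my], Q as [qx qy].
  unfold foot, dot, cross, vsub, vadd, vscale in *; cbn [fst snd] in *.
  set (D := mx * mx + my * my) in *.
  f_equal; apply (Rmult_eq_reg_r D); try lra.
  - replace ((fx + (1 - (mx * fx + my * fy)) / D * mx) * D)
      with (fx * D + (1 - (mx * fx + my * fy)) * mx) by (field; lra).
    assert (E : qx * D - (fx * D + (1 - (mx * fx + my * fy)) * mx) =
                - my * ((fx - qx) * my - (fy - qy) * mx) + mx * (mx * qx + my * qy - 1))
      by (unfold D; ring).
    rewrite H1, H2 in E. lra.
  - replace ((fy + (1 - (mx * fx + my * fy)) / D * my) * D)
      with (fy * D + (1 - (mx * fx + my * fy)) * my) by (field; lra).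
    assert (E : qy * D - (fy * D + (1 - (mx * fx + my * fy)) * my) =
                mx * ((fx - qx) * my - (fy - qy) * mx) + my * (mx * qx + my * qy - 1))
      by (unfold D; ring).
    rewrite H1, H2 in E. lra.
Qed.

Lemma foot_opp (f m : pt) : foot (vscale (-1) f) (vscale (-1) m) = vscale (-1) (foot f m).
Proof.
  unfold foot.
  replace (dot (vscale (-1) m) (vscale (-1) f)) with (dot m f)
    by (unfold dot, vscale; cbn [fst snd]; ring).
  replace (dot (vscale (-1) m) (vscale (-1) m)) with (dot m m)
    by (unfold dot, vscale; cbn [fst snd]; ring).
  unfold vadd, vscale; cbn [fst snd]. f_equal; ring.
Qed.

Lemma pedal_foot_on_tangent (a b : R) (f : pt) (P P' Q : nat -> pt) (i : nat) :
  outer_polygon a b P P' -> pedal_feet f P' Q -> P' i <> P' (S i) ->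
  Q i = foot f (ell_normal a b (P (S i))).
Proof.
  intros Hout Hq Hd. set (n := ell_normal a b (P (S i))).
  destruct (Hq i) as [Hon Hperp].
  assert (H1 : dot n (P' i) = 1) by exact (on_tangent_normal _ _ _ _ (proj2 (Hout i))).
  assert (H2 : dot n (P' (S i)) = 1) by exact (on_tangent_normal _ _ _ _ (proj1 (Hout (S i)))).
  apply foot_unique; [exact (on_line_dot_one n _ _ _ H1 H2 Hon)|].
  apply (cross_zero_of_common_normal _ _ (vsub (P' (S i)) (P' i))).
  - intro E. apply (vsub_nonzero _ _ Hd). exact E.
  - rewrite <- Hperp. unfold dot; ring.
  - unfold dot, vsub in *; cbn [fst snd] in *. lra.
Qed.

(* Consecutive vertices of the outer polygon are distinct: a common vertex of
   the tangents at P_i, P_{i+1}, P_{i+2} would put these three points on its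
   polar line. *)
Lemma outer_vertices_distinct (a b : R) (P P' : nat -> pt) (i : nat) : a > 0 -> b > 0 ->
  (forall j, on_ellipse a b (P j)) -> (forall j, P j <> P (S j)) -> P i <> P (S (S i)) ->
  outer_polygon a b P P' -> P' i <> P' (S i).
Proof.
  intros Ha Hb Hell Hneq Hneq2 Hout E.
  pose proof (on_tangent_polar _ _ _ _ (proj1 (Hout i))) as H0.
  pose proof (on_tangent_polar _ _ _ _ (proj2 (Hout i))) as H1.
  pose proof (on_tangent_polar _ _ _ _ (proj2 (Hout (S i)))) as H2. rewrite <- E in H2.
  apply (ellipse_no_three_collinear a b (P i) (P (S i)) (P (S (S i))) Ha Hb
           (Hell _) (Hell _) (Hell _) (Hneq i) Hneq2 (Hneq (S i))).
  apply collinear_on_line; [apply Hneq|]. exact (dot_one_collinear _ _ _ _ H0 H1 H2).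
Qed.

Definition period_sum (N : nat) (h : nat -> R) : R := fold_right Rplus 0 (map h (seq 0 N)).

Lemma period_sum_succ (N : nat) (h : nat -> R) : (forall i, h (i + N)%nat = h i) ->
  period_sum N (fun i => h (S i)) = period_sum N h.
Proof.
  intros Hp. unfold period_sum. destruct N as [|n]; [reflexivity|].
  rewrite <- (map_map S h), seq_shift, seq_S, map_app, fold_right_app. cbn [map fold_right seq].
  rewrite <- (Hp 0%nat). cbn [Nat.add].
  assert (Hfold : forall l c, fold_right Rplus c l = c + fold_right Rplus 0 l).
  { induction l as [|x l IH]; intros c; cbn [fold_right]; [ring | rewrite IH; ring]. }
  rewrite Hfold. ring.
Qed.

Lemma period_sum_shift (N k : nat) (h : nat -> R) : (forall i, h (i + N)%nat = h i) ->
  period_sum N (fun i => h (k + i)%nat) = period_sum N h.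
Proof.
  intros Hp. induction k as [|k IH]; [reflexivity|].
  rewrite <- IH, <- (period_sum_succ N (fun i => h (k + i)%nat)).
  - unfold period_sum. f_equal. apply map_ext. intros i. f_equal. lia.
  - intros i. replace (k + (i + N))%nat with ((k + i) + N)%nat by lia. apply Hp.
Qed.

Lemma signed_area_periodic (N : nat) (W : nat -> pt) : (N > 0)%nat ->
  (forall i, W (i + N)%nat = W i) ->
  signed_area N W = / 2 * period_sum N (fun i => cross (W i) (W (S i))).
Proof.
  intros HN Hp. unfold signed_area, period_sum. f_equal. f_equal. apply map_ext_in.
  intros i Hi. apply in_seq in Hi. f_equal.
  destruct (Nat.eq_dec (S i) N) as [E|E].
  - rewrite E, Nat.Div0.mod_same. exact (eq_sym (Hp 0%nat)).
  - rewrite Nat.mod_small by lia. reflexivity.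
Qed.

Lemma signed_area_half_turn (N k : nat) (W W' : nat -> pt) : (N > 0)%nat ->
  (forall i, W (i + N)%nat = W i) -> (forall i, W' i = vscale (-1) (W (k + i)%nat)) ->
  signed_area N W' = signed_area N W.
Proof.
  intros HN Hp HW'.
  assert (Hp' : forall i, W' (i + N)%nat = W' i).
  { intros i. rewrite !HW'. replace (k + (i + N))%nat with ((k + i) + N)%nat by lia. rewrite Hp. reflexivity. }
  rewrite (signed_area_periodic N W' HN Hp'), (signed_area_periodic N W HN Hp).
  f_equal. rewrite <- (period_sum_shift N k (fun i => cross (W i) (W (S i)))).
  - unfold period_sum. f_equal. apply map_ext. intros i.
    rewrite !HW'. replace (k + S i)%nat with (S (k + i)) by lia.
    unfold cross, vscale; cbn [fst snd]. ring.
  - intros i. replace (S (i + N)) with (S i + N)%nat by lia. rewrite !Hp. reflexivity.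
Qed.

Theorem mainTheorem3 (a b : R) (N : nat) (P P' Q1 Q2 : nat -> pt) :
  a > b -> b > 0 ->
  (4 <= N)%nat -> Nat.Even N ->
  billiard_trajectory a b N P ->
  outer_polygon a b P P' ->
  pedal_feet (focus1 a b) P' Q1 ->
  pedal_feet (focus2 a b) P' Q2 ->
  signed_area N Q1 = signed_area N Q2.
Proof.
  intros Hab Hb HN Hev Hbt Hout Hq1 Hq2.
  destruct Hbt as (Hper & Hell & Hneq & (r & phi & Hr & Hpol & Hinc & Hphiper)
                   & Hconv & _ & (A & B & Hconf & Htan)).
  assert (Ha : a > 0) by lra. assert (HN3 : (3 <= N)%nat) by lia.
  destruct (central_symmetry a b A B N P r phi Ha Hb HN3 Hper Hell Hneq Hr Hpol Hinc
              Hphiper Hconv Hconf Htan Hev) as [k [Hk Hsym]].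
  assert (Hfoot : forall f Q, pedal_feet f P' Q -> forall i, Q i = foot f (ell_normal a b (P (S i)))).
  { intros f Q Hq i. apply (pedal_foot_on_tangent a b f P P' Q i Hout Hq).
    apply (outer_vertices_distinct a b P P' i Ha Hb Hell Hneq); [|exact Hout].
    exact (vertices_two_apart_distinct N P r phi HN3 Hr Hpol Hinc Hphiper i). }
  symmetry. apply (signed_area_half_turn N k Q1 Q2); [lia | |].
  - intros i. rewrite !(Hfoot _ _ Hq1). replace (S (i + N)) with (S i + N)%nat by lia.
    rewrite Hper. reflexivity.
  - intros i. rewrite (Hfoot _ _ Hq2), (Hfoot _ _ Hq1), <- foot_opp.
    replace (S (k + i)) with (k + S i)%nat by lia. rewrite Hsym.
    unfold focus1, focus2, ell_normal, vscale; cbn [fst snd].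
    f_equal; f_equal; [ring | ring | field; lra | field; lra].
Qed.
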